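(* Let $H\in\mathbb{C}^{n\times n}$ be Hermitian with eigenvalues $\lambda_1(H)\ge\lambda_2(H)\ge\cdots\ge\lambda_n(H)$ (counted with multiplicity), let $1\le k<n$, and suppose $\lambda_k(H)-\lambda_{k+1}(H)>0$. Let $P_*\in\mathbb{C}^{n\times k}$ with $P_*^{\mathrm{H}}P_*=I_k$ be such that its column space ${\cal R}(P_* )$ is the invariant subspace of $H$ associated with its $k$ largest eigenvalues $\lambda_1(H),\dots,\lambda_k(H)$. Given any $P\in\mathbb{C}^{n\times k}$ with $P^{\mathrm{H}}P=I_k$, let $$\eta=\operatorname{tr}(P_*^{\mathrm{H}}HP_* )-\operatorname{tr}(P^{\mathrm{H}}HP),\qquad \epsilon=\sqrt{\frac{\eta}{\lambda_k(H)-\lambda_{k+1}(H)}}.$$ Then $$\frac{\|HP-P(P^{\mathrm{H}}HP)\|_{\mathrm{F}}}{\lambda_1(H)-\lambda_n(H)}\le\|\sin\Theta({\cal R}(P),{\cal R}(P_* ))\|_{\mathrm{F}}\le\epsilon.$$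
   Context: For a matrix $X$, $X^{\mathrm{H}}$ is its conjugate transpose, ${\cal R}(X)$ its column space, $\|X\|_{\mathrm{F}}=\sqrt{\operatorname{tr}(X^{\mathrm{H}}X)}$ the Frobenius norm. For two $k$-dimensional subspaces ${\cal X}={\cal R}(X)$, ${\cal Y}={\cal R}(Y)$ of $\mathbb{C}^n$ with $X,Y\in\mathbb{C}^{n\times k}$ having orthonormal columns, the canonical angles are $\theta_i=\arccos\sigma_i(X^{\mathrm{H}}Y)\in[0,\pi/2]$, $i=1,\dots,k$, where $\sigma_1(X^{\mathrm{H}}Y)\ge\cdots\ge\sigma_k(X^{\mathrm{H}}Y)$ are the singular values; $\Theta({\cal X},{\cal Y})=\operatorname{diag}(\theta_1,\dots,\theta_k)$ and $\|\sin\Theta({\cal X},{\cal Y})\|_{\mathrm{F}}=\big(\sum_{i=1}^k\sin^2\theta_i\big)^{1/2}$. *)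

From HB Require Import structures.
From mathcomp Require Import all_boot all_order all_algebra.
From mathcomp Require Import complex sesquilinear spectral.
From mathcomp Require Import reals trigo.
Set Implicit Arguments. Unset Strict Implicit. Unset Printing Implicit Defensive.
Import Order.TTheory GRing.Theory Num.Theory.
Local Open Scope ring_scope.
Local Open Scope sesquilinear_scope.

Section Defs.
Variable R : realType.
Local Notation C := R[i].

Definition hermmx n (H : 'M[C]_n) : Prop := H ^t* = H.

(* [lam] is the list of eigenvalues of H, counted with multiplicity,
   in nonincreasing order: lam`_0 >= lam`_1 >= ... (so lambda_i(H) = lam`_(i-1)). *)
Definition sorted_eigenvalues n (H : 'M[C]_n) (lam : seq R) : Prop :=
  [/\ size lam = n, sorted (fun a b => b <= a) lam &
      char_poly H = \prod_(l <- lam) ('X - ((l%:C)%C)%:P)].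

Definition frobnorm m n (A : 'M[C]_(m, n)) : R :=
  Num.sqrt (complex.Re (\tr (A ^t* *m A))).

(* singular values of A : 'M_(m,k) : square roots of the eigenvalues of the
   Hermitian positive semidefinite matrix A^H A (order is irrelevant below) *)
Definition sing_vals m k (A : 'M[C]_(m, k)) (i : 'I_k) : R :=
  Num.sqrt (complex.Re (spectral_diag (A ^t* *m A) 0 i)).

Definition canon_angle n k (X Y : 'M[C]_(n, k)) (i : 'I_k) : R :=
  acos (sing_vals (X ^t* *m Y) i).

Definition sinThetaF n k (X Y : 'M[C]_(n, k)) : R :=
  Num.sqrt (\sum_(i < k) (sin (canon_angle X Y i)) ^+ 2).

End Defs.

(* Let Pi = Ps Ps^H.  The cosines of the canonical angles are the singular
   values of P^H Ps, so |sin Theta|_F^2 = k - |P^H Ps|_F^2 = |(I - Pi) P|_F^2,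
   which we call s2; by symmetry also s2 = |(I - P P^H) Ps|_F^2.

   Lower bound: Pi commutes with H, so for the midpoint c of the spectrum
     H P - P (P^H H P) = (I - P P^H) (H - c) (I - Pi) P
                       + (I - P P^H) Pi (H - c) P,
   and as |H - c| <= (lambda_1 - lambda_n) / 2, each term has squared norm at
   most ((lambda_1 - lambda_n) / 2)^2 s2.

   Upper bound: write H Ps = Ps M and P = Ps B + Y with Ps^H Y = 0, so that
   tr (P^H H P) = tr (B^H M B) + tr (Y^H H Y).  Since R(Ps) is the top
   eigenspace, Y only meets eigenvalues <= lambda_(k+1), giving
   tr (Y^H H Y) <= lambda_(k+1) s2; and with X = (I - P P^H) Ps,
   tr M - tr (B^H M B) = tr (X M X^H) >= lambda_k s2.
   Hence eta >= (lambda_k - lambda_(k+1)) s2. *)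

From HB Require Import structures.
From mathcomp Require Import all_boot all_order all_algebra.
From mathcomp Require Import complex sesquilinear spectral.
From mathcomp Require Import reals trigo.
From mathcomp Require Import ring lra.
Import Order.TTheory GRing.Theory Num.Theory.
Set Implicit Arguments. Unset Strict Implicit. Unset Printing Implicit Defensive.
Local Open Scope ring_scope.
Local Open Scope sesquilinear_scope.

Lemma sqrtr_divr_le (R : rcfType) (x y c : R) : 0 < c -> 0 <= x -> x <= c ^+ 2 * y ->
  Num.sqrt x / c <= Num.sqrt y.
Proof.
move=> c0 x0 Hxy; have y0 : 0 <= y.
  by rewrite -(pmulr_rge0 _ (exprn_gt0 2 c0)) (le_trans x0).
rewrite ler_pdivrMr // -[c in _ * c]gtr0_norm // -sqrtr_sqr -sqrtrM //.
by rewrite ler_sqrt ?(mulr_ge0 y0 (sqr_ge0 c)) // mulrC.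
Qed.

Lemma sqrtr_le_divr (R : rcfType) (x y c : R) : 0 < c -> c * y <= x ->
  Num.sqrt y <= Num.sqrt (x / c).
Proof.
move=> c0 Hxy; have [y0|y0] := leP 0 y; last by rewrite ltr0_sqrtr // sqrtr_ge0.
have x0 : 0 <= x by apply: le_trans Hxy; rewrite mulr_ge0 // ltW.
by rewrite ler_sqrt ?divr_ge0 ?(ltW c0) // ler_pdivlMr // mulrC.
Qed.

Lemma char_poly_similar (R : comUnitRingType) n (V U D : 'M[R]_n) :
  V *m U = 1%:M -> char_poly (V *m D *m U) = char_poly D.
Proof.
move=> HVU; rewrite /char_poly /char_poly_mx.
set Vp := map_mx polyC V; set Up := map_mx polyC U.
have HVUp : Vp *m Up = 1%:M by rewrite -map_mxM HVU map_mx1.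
have -> : 'X%:M - map_mx polyC (V *m D *m U) = Vp *m ('X%:M - map_mx polyC D) *m Up.
  rewrite !map_mxM mulmxBr mulmxBl -/Vp -/Up; congr (_ - _).
  by rewrite scalar_mxC -mulmxA HVUp mulmx1.
by rewrite !det_mulmx mulrC mulrA -det_mulmx (mulmx1C HVUp) det1 mul1r.
Qed.

Lemma horner_mx_intertwine (R : comNzRingType) n m (A : 'M[R]_n.+1) (B : 'M[R]_m.+1)
    (Z : 'M[R]_(n.+1, m.+1)) (p : {poly R}) :
  A *m Z = Z *m B -> horner_mx A p *m Z = Z *m horner_mx B p.
Proof.
move=> HAB; elim/poly_ind: p => [|p c IH]; first by rewrite !rmorph0 mul0mx mulmx0.
rewrite !rmorphD !rmorphM /= !horner_mx_X !horner_mx_C -!mulmxE.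
rewrite mulmxDl mulmxDr -mulmxA HAB mulmxA IH -!mulmxA; congr (_ + _).
by rewrite scalar_mxC.
Qed.

Lemma intertwine_row_eq0 (F : fieldType) n k (d : 'rV[F]_n) (M : 'M[F]_k)
    (Z : 'M[F]_(n, k)) (i : 'I_n) :
  diag_mx d *m Z = Z *m M -> ~~ root (char_poly M) (d 0 i) -> row i Z = 0.
Proof.
case: n d Z i => [|n] d Z i; first by case: i.
case: k M Z => [|k] M Z; first by move=> *; exact: thinmx0.
move=> /(horner_mx_intertwine (char_poly M)); rewrite Cayley_Hamilton mulmx0.
rewrite horner_mx_diag /root => HZ /negbTE Hroot; apply/rowP => j; rewrite !mxE.
move/matrixP: HZ => /(_ i j); rewrite mul_diag_mx !mxE => /eqP.
by rewrite mulf_eq0 Hroot => /eqP.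
Qed.

Section ConjugateTranspose.
Variable C : numClosedFieldType.

Lemma trmxC_mul m n p (A : 'M[C]_(m, n)) (B : 'M[C]_(n, p)) :
  (A *m B)^t* = B^t* *m A^t*.
Proof. by rewrite trmx_mul map_mxM. Qed.

Lemma trmxCD m n (A B : 'M[C]_(m, n)) : (A + B)^t* = A^t* + B^t*.
Proof. by rewrite linearD map_mxD. Qed.

Lemma trmxCB m n (A B : 'M[C]_(m, n)) : (A - B)^t* = A^t* - B^t*.
Proof. by rewrite linearB map_mxB. Qed.

Lemma trmxC_scalar n (c : C) : (c%:M : 'M[C]_n)^t* = (c^*)%:M.
Proof. by rewrite tr_scalar_mx map_scalar_mx. Qed.

Lemma trmxC1 n : (1%:M : 'M[C]_n)^t* = 1%:M.
Proof. by rewrite trmxC_scalar conjC1. Qed.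

Lemma trmxC0 m n : (0 : 'M[C]_(m, n))^t* = 0.
Proof. by rewrite trmx0 map_mx0. Qed.

Lemma trmxC_delta m n (i : 'I_m) (j : 'I_n) :
  (delta_mx i j : 'M[C]_(m, n))^t* = delta_mx j i.
Proof.
by apply/matrixP => a b; rewrite !mxE; case: eqP; case: eqP; rewrite ?conjC1 ?conjC0.
Qed.

Lemma unitarymx_trmxC_mul n (U : 'M[C]_n) : U \is unitarymx -> U^t* *m U = 1%:M.
Proof. by move=> HU; rewrite -[U^t*]mul1mx mulmxKtV. Qed.

Lemma trmxC_compl_proj n k (Q : 'M[C]_(n, k)) :
  (1%:M - Q *m Q^t*)^t* = 1%:M - Q *m Q^t*.
Proof. by rewrite trmxCB trmxC1 trmxC_mul trmxCK. Qed.

Section Isometry.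
Variables (n k : nat) (Q : 'M[C]_(n, k)).
Hypothesis HQ : Q^t* *m Q = 1%:M.

Lemma compl_projK :
  (1%:M - Q *m Q^t*)^t* *m (1%:M - Q *m Q^t*) = 1%:M - Q *m Q^t*.
Proof.
rewrite trmxC_compl_proj mulmxBl mul1mx mulmxBr mulmx1.
by rewrite mulmxA -(mulmxA Q) HQ mulmx1 subrr subr0.
Qed.

Lemma trmxC_mul_compl_proj : Q^t* *m (1%:M - Q *m Q^t*) = 0.
Proof. by rewrite mulmxBr mulmx1 mulmxA HQ mul1mx subrr. Qed.

Lemma compl_proj_mulmx : (1%:M - Q *m Q^t*) *m Q = 0.
Proof. by rewrite mulmxBl mul1mx -mulmxA HQ mulmx1 subrr. Qed.

End Isometry.

Lemma selfadjoint_normalmx n (A : 'M[C]_n) : A^t* = A -> A \is normalmx.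
Proof. by move=> HA; apply/normalmxP; rewrite HA. Qed.

Lemma gram_normalmx m n (A : 'M[C]_(m, n)) : A^t* *m A \is normalmx.
Proof. by apply: selfadjoint_normalmx; rewrite trmxC_mul trmxCK. Qed.

Lemma spectral_decomp n (A : 'M[C]_n) : A \is normalmx ->
  A = (spectralmx A)^t* *m diag_mx (spectral_diag A) *m spectralmx A.
Proof.
by move=> /orthomx_spectralP {1}->; rewrite invmx_unitary // spectral_unitarymx.
Qed.

Lemma spectralmx_mul n (A : 'M[C]_n) : A \is normalmx ->
  spectralmx A *m A = diag_mx (spectral_diag A) *m spectralmx A.
Proof.
move=> HA; rewrite [X in _ *m X = _](spectral_decomp HA).
by rewrite !mulmxA (unitarymxP (spectral_unitarymx A)) mul1mx.
Qed.

Lemma char_poly_spectral n (A : 'M[C]_n) : A \is normalmx ->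
  char_poly A = \prod_i ('X - (spectral_diag A 0 i)%:P).
Proof.
move=> HA; rewrite {1}(spectral_decomp HA) char_poly_similar; last first.
  exact: unitarymx_trmxC_mul (spectral_unitarymx A).
rewrite char_poly_trig ?diag_mx_is_trig //.
by apply: eq_bigr => i _; rewrite mxE eqxx mulr1n.
Qed.

Lemma spectral_diag_perm_eq n (A : 'M[C]_n) (s : seq C) : A \is normalmx ->
  char_poly A = \prod_(x <- s) ('X - x%:P) ->
  perm_eq [seq spectral_diag A 0 i | i <- enum 'I_n] s.
Proof.
by move=> /char_poly_spectral -> E; apply: prod_XsubC_eq; rewrite -E big_map big_enum.
Qed.

Lemma root_char_poly_spectral n (A : 'M[C]_n) i : A \is normalmx ->
  root (char_poly A) (spectral_diag A 0 i).
Proof.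
move=> /char_poly_spectral ->; rewrite rootE horner_prod.
by apply/prodf_eq0; exists i => //; rewrite hornerXsubC subrr.
Qed.

Lemma mxtrace_spectral n (A : 'M[C]_n) : A \is normalmx ->
  \tr A = \sum_i spectral_diag A 0 i.
Proof.
move=> HA; rewrite [in LHS](spectral_decomp HA) mxtrace_mulC mulmxA.
by rewrite (unitarymxP (spectral_unitarymx A)) mul1mx mxtrace_diag.
Qed.

Lemma residual_split n k (H : 'M[C]_n) (P Q : 'M[C]_(n, k)) (c : C) :
  P^t* *m P = 1%:M -> H *m (Q *m Q^t*) = (Q *m Q^t*) *m H ->
  H *m P - P *m (P^t* *m H *m P) =
    (1%:M - P *m P^t*) *m (H - c%:M) *m (1%:M - Q *m Q^t*) *m P
  + (1%:M - P *m P^t*) *m (Q *m Q^t*) *m (H - c%:M) *m P.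
Proof.
move=> HP HQ; set Pi := Q *m Q^t*.
have Hc : (H - c%:M) *m Pi = Pi *m (H - c%:M) by rewrite mulmxBl mulmxBr HQ scalar_mxC.
have E : (H - c%:M) *m (1%:M - Pi) + Pi *m (H - c%:M) = H - c%:M.
  by rewrite mulmxBr mulmx1 Hc subrK.
transitivity ((1%:M - P *m P^t*) *m ((H - c%:M) *m (1%:M - Pi) + Pi *m (H - c%:M)) *m P);
  last by rewrite (mulmxDr _ ((H - c%:M) *m _)) (mulmxDl _ _ P) !mulmxA.
rewrite E mulmxBr (mulmxBl _ _ P) scalar_mxC -(mulmxA c%:M) (compl_proj_mulmx HP).
by rewrite mulmx0 subr0 (mulmxBl 1%:M) mul1mx (mulmxBl H) !mulmxA.
Qed.

End ConjugateTranspose.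


Section Frobenius.
Variable R : rcfType.
Local Notation C := R[i].
Local Notation Re := (@complex.Re R).
Local Notation Im := (@complex.Im R).

Definition sqnormc (x : C) : R := Re x ^+ 2 + Im x ^+ 2.

Lemma sqnormc_ge0 (x : C) : 0 <= sqnormc x.
Proof. by rewrite addr_ge0 ?sqr_ge0. Qed.

Lemma sqnormc_eq0 (x : C) : (sqnormc x == 0) = (x == 0).
Proof.
rewrite paddr_eq0 ?sqr_ge0 // !sqrf_eq0.
by case: x => a b; rewrite eq_complex.
Qed.

Lemma Re_conjCM (x : C) : Re (x^* * x) = sqnormc x.
Proof. by case: x => a b; rewrite /sqnormc /=; ring. Qed.

Definition fnorm2 m n (X : 'M[C]_(m, n)) : R := Re (\tr (X^t* *m X)).

Lemma fnorm2E m n (X : 'M[C]_(m, n)) : fnorm2 X = \sum_i \sum_j sqnormc (X i j).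
Proof.
rewrite /fnorm2 /mxtrace raddf_sum exchange_big; apply: eq_bigr => i _.
rewrite mxE raddf_sum; apply: eq_bigr => j _; rewrite !mxE; exact: Re_conjCM.
Qed.

Lemma fnorm2_rows m n (X : 'M[C]_(m, n)) : fnorm2 X = \sum_i fnorm2 (row i X).
Proof.
rewrite fnorm2E; apply: eq_bigr => i _.
by rewrite fnorm2E big_ord1; apply: eq_bigr => j _; rewrite mxE.
Qed.

Lemma fnorm2_ge0 m n (X : 'M[C]_(m, n)) : 0 <= fnorm2 X.
Proof. by rewrite fnorm2E; do 2![apply: sumr_ge0 => ? _]; exact: sqnormc_ge0. Qed.

Lemma fnorm2_eq0 m n (X : 'M[C]_(m, n)) : fnorm2 X = 0 -> X = 0.
Proof.
have Hrow i : 0 <= \sum_j sqnormc (X i j).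
  by apply: sumr_ge0 => j _; exact: sqnormc_ge0.
rewrite fnorm2E => /eqP; rewrite psumr_eq0 // => /allP HX.
apply/matrixP => i j; have /implyP/(_ isT) := HX i (mem_index_enum i).
rewrite psumr_eq0 => [/allP/(_ j (mem_index_enum j))|j' _]; last exact: sqnormc_ge0.
by rewrite sqnormc_eq0 mxE => /eqP.
Qed.

Lemma fnorm2_0 m n : fnorm2 (0 : 'M[C]_(m, n)) = 0.
Proof. by rewrite /fnorm2 mulmx0 mxtrace0. Qed.

Lemma fnorm2_trmxC m n (X : 'M[C]_(m, n)) : fnorm2 (X^t*) = fnorm2 X.
Proof. by rewrite /fnorm2 trmxCK mxtrace_mulC. Qed.

Lemma fnorm2_delta n (i : 'I_n) : fnorm2 (delta_mx i 0 : 'M[C]_(n, 1)) = 1.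
Proof. by rewrite /fnorm2 trmxC_delta mul_delta_mx /mxtrace big_ord1 mxE. Qed.

Lemma fnorm2_row_delta n (i j : 'I_n) :
  fnorm2 (row j (delta_mx i 0 : 'M[C]_(n, 1))) = (j == i)%:R.
Proof.
rewrite rowE mul_delta_mx_cond eq_sym.
by case: eqP => _; rewrite ?mulr1n ?fnorm2_delta ?mulr0n ?fnorm2_0.
Qed.

Lemma fnorm2Z m n (a : C) (X : 'M[C]_(m, n)) : fnorm2 (a *: X) = sqnormc a * fnorm2 X.
Proof.
rewrite !fnorm2E mulr_sumr; apply: eq_bigr => i _; rewrite mulr_sumr.
by apply: eq_bigr => j _; rewrite mxE /sqnormc; case: a; case: (X i j) => /= *; ring.
Qed.

Lemma fnorm2D_le m n (A B : 'M[C]_(m, n)) (w : R) :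
  fnorm2 A <= w -> fnorm2 B <= w -> fnorm2 (A + B) <= 4 * w.
Proof.
move=> HA HB; apply: le_trans (_ : 2 * fnorm2 A + 2 * fnorm2 B <= _); last by lra.
rewrite !fnorm2E !mulr_sumr -big_split /=; apply: ler_sum => i _.
rewrite !mulr_sumr -big_split /=; apply: ler_sum => j _.
rewrite mxE /sqnormc -subr_ge0; case: (A i j) => x y; case: (B i j) => u v /=.
have -> : 2 * (x ^+ 2 + y ^+ 2) + 2 * (u ^+ 2 + v ^+ 2) - ((x + u) ^+ 2 + (y + v) ^+ 2)
  = (x - u) ^+ 2 + (y - v) ^+ 2 by ring.
by rewrite addr_ge0 ?sqr_ge0.
Qed.

Section Isometry.
Variables (n k : nat) (Q : 'M[C]_(n, k)).
Hypothesis HQ : Q^t* *m Q = 1%:M.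

Lemma fnorm2_isometry : fnorm2 Q = k%:R.
Proof. by rewrite /fnorm2 HQ mxtrace1 raddfMn. Qed.

Lemma fnorm2_isometry_mul m (Y : 'M[C]_(k, m)) : fnorm2 (Q *m Y) = fnorm2 Y.
Proof. by rewrite /fnorm2 trmxC_mul mulmxA -(mulmxA _ _ Q) HQ mulmx1. Qed.

Lemma fnorm2_pythagoras m (X : 'M[C]_(n, m)) :
  fnorm2 X = fnorm2 (Q^t* *m X) + fnorm2 ((1%:M - Q *m Q^t*) *m X).
Proof.
rewrite /fnorm2 -raddfD /= -mxtraceD; congr (Re (\tr _)).
rewrite !trmxC_mul trmxCK -[Y in _ + Y]mulmxA (mulmxA ((1%:M - Q *m Q^t*)^t*)).
rewrite compl_projK //.
by rewrite mulmxBl mul1mx mulmxBr !mulmxA addrC subrK.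
Qed.

Lemma fnorm2_trmxC_mul_le m (X : 'M[C]_(n, m)) : fnorm2 (Q^t* *m X) <= fnorm2 X.
Proof. by rewrite [leRHS]fnorm2_pythagoras lerDl fnorm2_ge0. Qed.

Lemma fnorm2_compl_le m (X : 'M[C]_(n, m)) :
  fnorm2 ((1%:M - Q *m Q^t*) *m X) <= fnorm2 X.
Proof. by rewrite [leRHS]fnorm2_pythagoras lerDr fnorm2_ge0. Qed.

End Isometry.

Lemma fnorm2_compl_sym n k (P Q : 'M[C]_(n, k)) :
  P^t* *m P = 1%:M -> Q^t* *m Q = 1%:M ->
  fnorm2 ((1%:M - P *m P^t*) *m Q) = fnorm2 ((1%:M - Q *m Q^t*) *m P).
Proof.
move=> HP HQ; have := fnorm2_pythagoras HP Q; have := fnorm2_pythagoras HQ P.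
rewrite (fnorm2_isometry HP) (fnorm2_isometry HQ) -(fnorm2_trmxC (P^t* *m Q)).
rewrite trmxC_mul trmxCK.
by move=> -> /addrI.
Qed.

Lemma row_diag_mul m n (e : 'rV[C]_m) (W : 'M[C]_(m, n)) i :
  row i (diag_mx e *m W) = e 0 i *: row i W.
Proof. by apply/rowP => j; rewrite mul_diag_mx !mxE. Qed.

Lemma fnorm2_diag_mul m n (e : 'rV[C]_m) (W : 'M[C]_(m, n)) :
  fnorm2 (diag_mx e *m W) = \sum_i sqnormc (e 0 i) * fnorm2 (row i W).
Proof. by rewrite fnorm2_rows; apply: eq_bigr => i _; rewrite row_diag_mul fnorm2Z. Qed.

Lemma form_diag m n (e : 'rV[C]_m) (W : 'M[C]_(m, n)) :
  Re (\tr (W^t* *m diag_mx e *m W)) = \sum_i Re (e 0 i) * fnorm2 (row i W).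
Proof.
rewrite /mxtrace raddf_sum.
under eq_bigr => l _ do rewrite -mulmxA mxE raddf_sum.
rewrite exchange_big; apply: eq_bigr => i _; rewrite fnorm2E big_ord1 mulr_sumr.
apply: eq_bigr => l _; rewrite mul_diag_mx !mxE /sqnormc.
by case: (W i l) => a b; case: (e 0 i) => x y /=; ring.
Qed.

Section HermitianForm.
Variables (n : nat) (A : 'M[C]_n).
Hypothesis HA : A \is normalmx.
Local Notation U := (spectralmx A).
Local Notation d := (spectral_diag A).

Lemma fnorm2_spectral_rows m (Z : 'M[C]_(n, m)) :
  fnorm2 Z = \sum_i fnorm2 (row i (U *m Z)).
Proof.
by rewrite -fnorm2_rows fnorm2_isometry_mul // unitarymx_trmxC_mul // spectral_unitarymx.
Qed.

Lemma form_spectral m (Z : 'M[C]_(n, m)) :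
  Re (\tr (Z^t* *m A *m Z)) = \sum_i Re (d 0 i) * fnorm2 (row i (U *m Z)).
Proof. by rewrite -form_diag {1}(spectral_decomp HA) trmxC_mul !mulmxA. Qed.

Lemma form_ge a m (Z : 'M[C]_(n, m)) :
  (forall i, a <= Re (d 0 i)) -> a * fnorm2 Z <= Re (\tr (Z^t* *m A *m Z)).
Proof.
move=> Ha; rewrite form_spectral fnorm2_spectral_rows mulr_sumr.
by apply: ler_sum => i _; rewrite ler_wpM2r ?fnorm2_ge0.
Qed.

Lemma form_le b m (Z : 'M[C]_(n, m)) :
  (forall i, row i (U *m Z) = 0 \/ Re (d 0 i) <= b) ->
  Re (\tr (Z^t* *m A *m Z)) <= b * fnorm2 Z.
Proof.
move=> Hb; rewrite form_spectral fnorm2_spectral_rows mulr_sumr.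
apply: ler_sum => i _; have [->|Hi] := Hb i; first by rewrite fnorm2_0 !mulr0.
by rewrite ler_wpM2r ?fnorm2_ge0.
Qed.

Lemma fnorm2_shift_mul_le (c : C) (r : R) m (Z : 'M[C]_(n, m)) :
  (forall i, sqnormc (d 0 i - c) <= r ^+ 2) ->
  fnorm2 ((A - c%:M) *m Z) <= r ^+ 2 * fnorm2 Z.
Proof.
move=> Hr; have HU := spectral_unitarymx A.
have -> : A - c%:M = U^t* *m diag_mx (d - const_mx c) *m U.
  rewrite {1}(spectral_decomp HA) linearB /= diag_const_mx mulmxBr mulmxBl.
  by congr (_ - _); rewrite scalar_mxC -mulmxA unitarymx_trmxC_mul // mulmx1.
rewrite -!mulmxA fnorm2_isometry_mul; last by rewrite trmxCK; exact/unitarymxP.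
rewrite fnorm2_diag_mul fnorm2_spectral_rows mulr_sumr.
by apply: ler_sum => i _; rewrite !mxE ler_wpM2r ?fnorm2_ge0.
Qed.

End HermitianForm.

Lemma isometry_support_row_eq0 n k m (Z : 'M[C]_(n, k)) (W : 'M[C]_(n, m))
    (S : {set 'I_n}) :
  Z^t* *m Z = 1%:M -> (#|S| <= k)%N -> (forall i, i \notin S -> row i Z = 0) ->
  Z^t* *m W = 0 -> forall i, i \in S -> row i W = 0.
Proof.
move=> HZ HS HZS HW.
(* The squared row norms of [Z] are at most 1 and add up to [k]; hence the rows
   indexed by [S] have norm 1, i.e. each [e i] with [i \in S] is in the range of [Z]. *)
pose e i : 'M[C]_(n, 1) := delta_mx i 0.
have He i : fnorm2 ((1%:M - Z *m Z^t*) *m e i) = 1 - fnorm2 (row i Z).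
  have := fnorm2_pythagoras HZ (e i).
  by rewrite fnorm2_delta -fnorm2_trmxC trmxC_mul trmxCK trmxC_delta -rowE => ->; ring.
have Hrow_le1 i : fnorm2 (row i Z) <= 1 by rewrite -subr_ge0 -He fnorm2_ge0.
have HsumS : \sum_(i in S) (1 - fnorm2 (row i Z)) = 0.
  apply/eqP; rewrite eq_le sumr_ge0 ?andbT => [|i _]; last by rewrite subr_ge0.
  have := fnorm2_isometry HZ; rewrite fnorm2_rows (bigID (mem S)) /=.
  rewrite [X in _ + X]big1 => [|i /HZS ->]; last exact: fnorm2_0.
  by rewrite addr0 sumrB sumr_const => ->; rewrite subr_le0 ler_nat.
move=> i Hi; have /fnorm2_eq0 Hei : fnorm2 ((1%:M - Z *m Z^t*) *m e i) = 0.
  by rewrite He (psumr_eq0P _ HsumS Hi) // => j _; rewrite subr_ge0.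
have -> : row i W = (e i)^t* *m W by rewrite trmxC_delta rowE.
move: Hei; rewrite mulmxBl mul1mx => /subr0_eq ->.
by rewrite !trmxC_mul trmxCK -!mulmxA HW !mulmx0.
Qed.

Lemma residual_fnorm2_le n k (H : 'M[C]_n) (P Q : 'M[C]_(n, k)) (a b : R) :
  H^t* = H -> P^t* *m P = 1%:M -> Q^t* *m Q = 1%:M ->
  H *m (Q *m Q^t*) = (Q *m Q^t*) *m H ->
  (forall i, a%:C%C <= spectral_diag H 0 i <= b%:C%C) ->
  fnorm2 (H *m P - P *m (P^t* *m H *m P))
    <= (b - a) ^+ 2 * fnorm2 ((1%:M - Q *m Q^t*) *m P).
Proof.
move=> HH HP HQ HHQ Hab.
pose c : C := ((a + b) / 2)%:C%C; pose r := (b - a) / 2.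
(* [c] is the midpoint of the spectrum, hence [|H - c| <= r]. *)
have Hshift m (Z : 'M[C]_(n, m)) : fnorm2 ((H - c%:M) *m Z) <= r ^+ 2 * fnorm2 Z.
  apply: fnorm2_shift_mul_le; first exact: selfadjoint_normalmx.
  move=> i; move: (Hab i); case: (spectral_diag H 0 i) => x y.
  rewrite !lecE /= => /andP[/andP[/eqP -> ax] /andP[_ xb]].
  rewrite /sqnormc /r /=; nra.
have HHc : (H - c%:M)^t* = H - c%:M.
  by rewrite trmxCB HH trmxC_scalar; congr (_ - _%:M); exact: conjc_real.
set s2 := fnorm2 ((1%:M - Q *m Q^t*) *m P).
have HT1 : fnorm2 ((1%:M - P *m P^t*) *m (H - c%:M) *m (1%:M - Q *m Q^t*) *m P)
    <= r ^+ 2 * s2.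
  rewrite -!mulmxA; apply: le_trans (fnorm2_compl_le HP _) _; exact: Hshift.
have HT2 : fnorm2 ((1%:M - P *m P^t*) *m (Q *m Q^t*) *m (H - c%:M) *m P)
    <= r ^+ 2 * s2.
  rewrite -fnorm2_trmxC !trmxC_mul HHc trmxC_compl_proj trmxCK -!mulmxA.
  set Y := Q *m (Q^t* *m (1%:M - P *m P^t*)).
  apply: le_trans (fnorm2_trmxC_mul_le HP ((H - c%:M) *m Y)) _.
  apply: le_trans (Hshift _ Y) _.
  rewrite /Y (fnorm2_isometry_mul HQ) -fnorm2_trmxC trmxC_mul trmxC_compl_proj trmxCK.
  by rewrite (fnorm2_compl_sym HP HQ) -/s2.
rewrite (residual_split c HP HHQ).
have -> : (b - a) ^+ 2 * s2 = 4 * (r ^+ 2 * s2) by rewrite /r; field.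
exact: fnorm2D_le HT1 HT2.
Qed.

End Frobenius.

Section TraceGap.
Variable R : rcfType.
Local Notation C := R[i].
Local Notation Re := (@complex.Re R).
Variables (n k : nat) (H : 'M[C]_n) (Q : 'M[C]_(n, k)) (M : 'M[C]_k) (a b : R).
Hypotheses (HH : H^t* = H) (HQ : Q^t* *m Q = 1%:M) (HM : H *m Q = Q *m M).
Hypothesis compression_spectrum_ge : forall x, root (char_poly M) x -> a <= Re x.
Hypothesis card_top_spectrum : (#|[set i | (a <= Re (spectral_diag H 0 i))%R]| <= k)%N.
Hypothesis spectrum_gap :
  forall i, Re (spectral_diag H 0 i) < a -> Re (spectral_diag H 0 i) <= b.

Lemma compression_eq : M = Q^t* *m H *m Q.
Proof. by rewrite -mulmxA HM mulmxA HQ mul1mx. Qed.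

Lemma compression_hermitian : M^t* = M.
Proof. by rewrite compression_eq !trmxC_mul trmxCK HH mulmxA. Qed.

Lemma trmxC_invariant : Q^t* *m H = M *m Q^t*.
Proof. by rewrite -{1}HH -trmxC_mul HM trmxC_mul compression_hermitian. Qed.

Lemma invariant_proj_comm : H *m (Q *m Q^t*) = (Q *m Q^t*) *m H.
Proof. by rewrite mulmxA HM -mulmxA -trmxC_invariant mulmxA. Qed.

Lemma form_invariant_decomp m (P : 'M[C]_(n, m)) :
  P^t* *m H *m P = (Q^t* *m P)^t* *m M *m (Q^t* *m P)
    + ((1%:M - Q *m Q^t*) *m P)^t* *m H *m ((1%:M - Q *m Q^t*) *m P).
Proof.
set B := Q^t* *m P; set Y := (1%:M - Q *m Q^t*) *m P.
have HQY : Q^t* *m Y = 0 by rewrite mulmxA trmxC_mul_compl_proj // mul0mx.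
have HYQ : Y^t* *m Q = 0 by rewrite -[Q]trmxCK -trmxC_mul HQY trmxC0.
have -> : P = Q *m B + Y by rewrite /Y /B mulmxBl mul1mx mulmxA addrC subrK.
have HQHY : Q^t* *m H *m Y = 0 by rewrite trmxC_invariant -mulmxA HQY mulmx0.
have HYHQ : Y^t* *m H *m Q = 0 by rewrite -mulmxA HM mulmxA HYQ mul0mx.
have -> : (Q *m B + Y)^t* *m H *m (Q *m B + Y) = B^t* *m (Q^t* *m H *m Q) *m B
    + B^t* *m (Q^t* *m H *m Y) + (Y^t* *m H *m Q) *m B + Y^t* *m H *m Y.
  by rewrite trmxCD trmxC_mul !mulmxDl !mulmxDr !mulmxA addrA.
by rewrite -compression_eq HQHY HYHQ mulmx0 mul0mx !addr0.
Qed.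

Lemma form_perp_le m (Y : 'M[C]_(n, m)) :
  Q^t* *m Y = 0 -> Re (\tr (Y^t* *m H *m Y)) <= b * fnorm2 Y.
Proof.
move=> HQY; have HHn := selfadjoint_normalmx HH.
set U := spectralmx H; set d := spectral_diag H.
have HU : U^t* *m U = 1%:M := unitarymx_trmxC_mul (spectral_unitarymx H).
have HUQ : (U *m Q)^t* *m (U *m Q) = 1%:M.
  by rewrite trmxC_mul mulmxA -(mulmxA _ _ U) HU mulmx1 HQ.
have HUY : (U *m Q)^t* *m (U *m Y) = 0.
  by rewrite trmxC_mul mulmxA -(mulmxA _ _ U) HU mulmx1 HQY.
have Hz : diag_mx d *m (U *m Q) = (U *m Q) *m M.
  by rewrite mulmxA -spectralmx_mul // -(mulmxA _ H Q) HM mulmxA.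
(* The rows of [U *m Q] vanish at eigenvalues of [H] that are not roots of
   [char_poly M]; hence this orthonormal frame is supported by the at most [k]
   indices of the top eigenvalues, and [U *m Y] vanishes on those rows. *)
apply: (form_le HHn) => i; case: (ltP (Re (d 0 i)) a) => Hi.
  by right; exact: spectrum_gap.
left; apply: (isometry_support_row_eq0 HUQ card_top_spectrum) => //; last by rewrite inE.
move=> j; rewrite inE -ltNge => Hj; apply: (intertwine_row_eq0 Hz).
by apply: contraTN Hj => /compression_spectrum_ge; rewrite -leNgt.
Qed.

Lemma form_compl_ge m (P : 'M[C]_(n, m)) : P^t* *m P = 1%:M ->
  a * fnorm2 ((1%:M - P *m P^t*) *m Q)
    <= Re (\tr M - \tr ((Q^t* *m P)^t* *m M *m (Q^t* *m P))).
Proof.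
move=> HP; set B := Q^t* *m P; set X := (1%:M - P *m P^t*) *m Q.
have HXX : X^t* *m X = 1%:M - B *m B^t*.
  rewrite /X trmxC_mul -mulmxA (mulmxA ((1%:M - P *m P^t*)^t*)) compl_projK //.
  rewrite mulmxBl mul1mx.
  by rewrite mulmxBr HQ /B trmxC_mul trmxCK !mulmxA.
have -> : \tr M - \tr (B^t* *m M *m B) = \tr ((X^t*)^t* *m M *m X^t*).
  rewrite trmxCK [RHS]mxtrace_mulC [in RHS]mulmxA HXX mulmxBl mul1mx raddfB /=.
  congr (_ - _).
  by rewrite mxtrace_mulC mulmxA.
have HMn := selfadjoint_normalmx compression_hermitian.
rewrite -fnorm2_trmxC; apply: form_ge => // i.
exact/compression_spectrum_ge/root_char_poly_spectral.
Qed.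

Lemma trace_gap_le (P : 'M[C]_(n, k)) : P^t* *m P = 1%:M ->
  (a - b) * fnorm2 ((1%:M - Q *m Q^t*) *m P)
    <= Re (\tr (Q^t* *m H *m Q) - \tr (P^t* *m H *m P)).
Proof.
move=> HP; rewrite -compression_eq form_invariant_decomp mxtraceD !raddfB raddfD /=.
have HQY : Q^t* *m ((1%:M - Q *m Q^t*) *m P) = 0.
  by rewrite mulmxA trmxC_mul_compl_proj // mul0mx.
have := form_compl_ge HP; rewrite fnorm2_compl_sym // raddfB /= => Hcompl.
by rewrite mulrBl opprD addrA; apply: lerB => //; exact: form_perp_le.
Qed.

End TraceGap.

Section SinTheta.
Variable R : realType.
Local Notation C := R[i].
Local Notation Re := (@complex.Re R).

Lemma sin_acos_sqrt (x : R) : 0 <= x <= 1 -> sin (acos (Num.sqrt x)) ^+ 2 = 1 - x.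
Proof.
move=> /andP[x0 x1]; rewrite sin2cos2 acosK ?sqr_sqrtr // in_itv /=.
by rewrite (le_trans _ (sqrtr_ge0 _)) ?lerN10 //= -sqrtr1 ler_sqrt.
Qed.

Lemma gram_spectral_diag_bound m k (A : 'M[C]_(m, k)) i :
  (forall v : 'cV[C]_k, fnorm2 (A *m v) <= fnorm2 v) ->
  0 <= Re (spectral_diag (A^t* *m A) 0 i) <= 1.
Proof.
move=> HA; set G := A^t* *m A; set V := spectralmx G.
have HV : V *m V^t* = 1%:M by apply/unitarymxP; exact: spectral_unitarymx.
(* The [i]-th eigenvalue of [G] is [|A v|^2] for the unit vector [v = V^H e_i]. *)
pose v : 'cV[C]_k := V^t* *m delta_mx i 0.
have Hv : fnorm2 (A *m v) = Re (spectral_diag G 0 i).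
  transitivity (Re (\tr (v^t* *m G *m v))); first by rewrite /fnorm2 trmxC_mul !mulmxA.
  rewrite form_spectral ?gram_normalmx // mulmxA HV mul1mx (bigD1 i) //=.
  rewrite big1 => [|j /negbTE Hj].
    by rewrite fnorm2_row_delta eqxx mulr1 addr0.
  by rewrite fnorm2_row_delta Hj mulr0.
rewrite -Hv fnorm2_ge0 /=; apply: le_trans (HA v) _.
by rewrite fnorm2_isometry_mul ?fnorm2_delta // trmxCK HV.
Qed.

Lemma sinThetaF_isometry n k (P Q : 'M[C]_(n, k)) :
  P^t* *m P = 1%:M -> Q^t* *m Q = 1%:M ->
  sinThetaF P Q = Num.sqrt (fnorm2 ((1%:M - Q *m Q^t*) *m P)).
Proof.
move=> HP HQ; rewrite /sinThetaF /canon_angle /sing_vals; congr Num.sqrt.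
have HA (v : 'cV[C]_k) : fnorm2 (P^t* *m Q *m v) <= fnorm2 v.
  by rewrite -mulmxA -(fnorm2_isometry_mul HQ v) fnorm2_trmxC_mul_le.
under eq_bigr => i _ do rewrite sin_acos_sqrt ?gram_spectral_diag_bound //.
rewrite sumrB sumr_const card_ord -raddf_sum -mxtrace_spectral ?gram_normalmx //=.
rewrite -/(fnorm2 _).
rewrite -fnorm2_trmxC trmxC_mul trmxCK.
have := fnorm2_pythagoras HQ P; rewrite (fnorm2_isometry HP) => ->.
by rewrite addrC addKr.
Qed.

End SinTheta.

Section RealSpectrum.
Variable R : rcfType.
Local Notation C := R[i].
Local Notation Re := (@complex.Re R).

Lemma spectral_diag_nth n (A : 'M[C]_n) (s : seq R) : A \is normalmx ->
  char_poly A = \prod_(l <- s) ('X - (l%:C%C)%:P) ->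
  forall i, exists2 m, (m < size s)%N & spectral_diag A 0 i = (s`_m)%:C%C.
Proof.
move=> HA Hc i.
have Hp : perm_eq [seq spectral_diag A 0 i | i <- enum 'I_n] [seq l%:C%C | l <- s].
  by apply: spectral_diag_perm_eq; rewrite // big_map.
have : spectral_diag A 0 i \in [seq l%:C%C | l <- s].
  by rewrite -(perm_mem Hp); apply: map_f; rewrite mem_enum.
by case/mapP => l Hl ->; exists (index l s); rewrite ?index_mem ?nth_index.
Qed.

Lemma card_spectral_ge n (A : 'M[C]_n) (s : seq R) (a : R) : A \is normalmx ->
  char_poly A = \prod_(l <- s) ('X - (l%:C%C)%:P) ->
  #|[set i | a <= Re (spectral_diag A 0 i)]| = count (fun l => a <= l) s.
Proof.
move=> HA Hc.
have Hp : perm_eq [seq spectral_diag A 0 i | i <- enum 'I_n] [seq l%:C%C | l <- s].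
  by apply: spectral_diag_perm_eq; rewrite // big_map.
rewrite -[RHS](count_map (fun l => l%:C%C) (fun x => a <= Re x)) -(permP Hp) count_map.
by rewrite enumT cardE /enum_mem size_filter; apply: eq_count => i; rewrite /= inE.
Qed.

Variable lam : seq R.
Hypothesis lam_sorted : sorted (fun a b => b <= a) lam.

Lemma sorted_nth_ge i j : (i <= j)%N -> (j < size lam)%N -> lam`_j <= lam`_i.
Proof.
move=> Hij Hj; have Htr : transitive (fun a b : R => b <= a).
  by move=> x y z h1 h2; exact: le_trans h2 h1.
by apply: (sorted_leq_nth Htr (@lexx _ R)) => //; rewrite inE (leq_ltn_trans Hij).
Qed.

Lemma count_ge_nth k : (k.+1 < size lam)%N -> lam`_k.+1 < lam`_k ->
  (count (fun l => (lam`_k <= l)%R) lam <= k.+1)%N.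
Proof.
move=> Hk Hgap; rewrite -[X in count _ X](cat_take_drop k.+1) count_cat.
rewrite -[X in (_ <= X)%N]addn0.
apply: leq_add; first by rewrite (leq_trans (count_size _ _)) // size_takel // ltnW.
rewrite leqn0 eqn0Ngt -has_count; apply/hasPn => x /(nthP 0) [j Hj <-].
rewrite size_drop in Hj; rewrite nth_drop -ltNge; apply: le_lt_trans _ Hgap.
by apply: sorted_nth_ge; rewrite ?leq_addr // -ltn_subRL.
Qed.

Lemma root_take_ge k x : (k < size lam)%N ->
  root (\prod_(l <- take k.+1 lam) ('X - (l%:C%C)%:P)) x -> lam`_k <= Re x.
Proof.
move=> Hk; rewrite -(big_map (fun l => l%:C%C) predT (fun x => 'X - x%:P)).
rewrite root_prod_XsubC.
case/mapP => l /(nthP 0) [j Hj <-] ->; rewrite size_takel // in Hj.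
by rewrite nth_take //= sorted_nth_ge // -ltnS.
Qed.

Lemma nth_lt_gap k m : (k < size lam)%N -> (m < size lam)%N ->
  lam`_m < lam`_k -> lam`_m <= lam`_k.+1.
Proof.
move=> Hk Hm Hmk; case: (leqP m k) => [Hmk'|Hkm]; last exact: sorted_nth_ge Hkm Hm.
by have := sorted_nth_ge Hmk' Hk; rewrite leNgt Hmk.
Qed.

End RealSpectrum.

Theorem theorem3p1 (R : realType) (n k : nat) (H : 'M[R[i]]_n) (lam : seq R)
    (Ps P : 'M[R[i]]_(n, k)) :
  hermmx H ->
  sorted_eigenvalues H lam ->
  (1 <= k)%N -> (k < n)%N ->
  lam`_(k.-1) - lam`_k > 0 ->
  Ps ^t* *m Ps = 1%:M ->
  (* R(Ps) is the invariant subspace of H associated with lambda_1..lambda_k *)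
  (exists M : 'M[R[i]]_k, H *m Ps = Ps *m M /\
      char_poly M = \prod_(l <- take k lam) ('X - ((l%:C)%C)%:P)) ->
  P ^t* *m P = 1%:M ->
  let eta := complex.Re (\tr (Ps ^t* *m H *m Ps) - \tr (P ^t* *m H *m P)) in
  let eps := Num.sqrt (eta / (lam`_(k.-1) - lam`_k)) in
  frobnorm (H *m P - P *m (P ^t* *m H *m P)) / (lam`_0 - lam`_(n.-1))
    <= sinThetaF P Ps <= eps.
Proof.
move=> HH [Hsz Hsort Hchar] Hk1 Hkn Hgap HPs [M [HM HcM]] HP /=.
case: k => [//|k] in Ps P M HPs HM HcM HP Hk1 Hkn Hgap *; rewrite /= in Hgap *.
have HHn := selfadjoint_normalmx HH.
have Hk : (k.+1 < size lam)%N by rewrite Hsz.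
have Hn0 : (0 < n)%N := leq_ltn_trans (leq0n _) Hkn.
have Hn : (n.-1 < size lam)%N by rewrite Hsz ltn_predL.
have Hd := spectral_diag_nth HHn Hchar; rewrite Hsz in Hd.
rewrite sinThetaF_isometry //; apply/andP; split.
  apply: sqrtr_divr_le; [|exact: fnorm2_ge0|].
    have Hk0 : lam`_k <= lam`_0 by apply: sorted_nth_ge; rewrite // ltnW.
    have Hkn1 : lam`_(n.-1) <= lam`_k.+1 by apply: sorted_nth_ge; rewrite // -ltnS prednK.
    lra.
  apply: residual_fnorm2_le => // [|i]; first exact: invariant_proj_comm HH HPs HM.
  have [m Hm ->] := Hd i.
  by rewrite !lecR !(sorted_nth_ge Hsort) ?Hsz // -ltnS prednK.
apply: sqrtr_le_divr => //; apply: (trace_gap_le HH HPs HM) => //.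
- by move=> x; rewrite HcM; apply: (root_take_ge Hsort); rewrite ltnW.
- by rewrite (card_spectral_ge _ HHn Hchar) (count_ge_nth Hsort) // -subr_gt0.
- move=> i; have [m Hm ->] := Hd i.
  by apply: (nth_lt_gap Hsort); rewrite ?Hsz // ltnW.
Qed.
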